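(* Let $T$ be a tree rooted at a vertex $r$, and let $x_1,\dots,x_t$ be the vertices of height one (non-root vertices all of whose children are leaves and which have at least one child). For each $i$, let $v_i$ be the non-leaf neighbor (parent) of $x_i$, let $k_i$ be the number of leaves adjacent to $v_i$, and let $r_i$ be the number of leaves adjacent to $x_i$. (1) If $k_i\ge1$ and $r_i\ge2$ for some $i$, then $b_{tR}(T)=1$. (2) If $k_i\ge 2$ and $r_i=1$ for some $i$, then $b_{tR}(T)\le \deg(v_i)-k_i$. (3) For integers $t\ge3$ and $2\le k\le t-1$, $b_{tR}(S(k,t))=t-k$.
   Context: A TRDF on $G=(V,E)$ is a function $f:V\to\{0,1,2\}$ such that every $v$ with $f(v)=0$ has a neighbor $u$ with $f(u)=2$ and the subgraph induced by $\{v:f(v)>0\}$ has no isolated vertices; $\gamma_{tR}(G)$ is its minimum weight. $b_{tR}(G)$ is the minimum $|E'|$ such that $G-E'$ has no isolated vertices and $\gamma_{tR}(G-E')>\gamma_{tR}(G)$ ($\infty$ if none). In a rooted tree, the height of a vertex $x$ is the length of a longest path from $x$ down to a leaf descendant. For $t\ge 2$, $k\ge1$, the wounded spider $S(k,t)$ is the star $K_{1,t}$ with $t-k$ of its edges subdivided once. *)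

From mathcomp Require Import all_boot.
Set Implicit Arguments. Unset Strict Implicit. Unset Printing Implicit Defensive.

Section Graphs.
Variable V : finType.

Definition simple_graph (e : rel V) : Prop := symmetric e /\ irreflexive e.

Definition is_tree (e : rel V) : Prop :=
  [/\ simple_graph e,
      (forall x y, connect e x y) &
      (forall c : seq V, uniq c -> 3 <= size c -> ~~ cycle e c)].

Definition nbhd (e : rel V) (x : V) : {set V} := [set y | e x y].
Definition deg (e : rel V) (x : V) : nat := #|nbhd e x|.
Definition leaf (e : rel V) (x : V) : bool := deg e x == 1.

Definition edges (e : rel V) : {set {set V}} :=
  [set s : {set V} | [exists x, exists y, e x y && (s == [set x; y])]].

Definition del_edges (e : rel V) (E' : {set {set V}}) : rel V :=
  [rel x y | e x y && ([set x; y] \notin E')].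

Definition no_isolated (e : rel V) : bool := [forall x, exists y, e x y].

Definition is_TRDF (e : rel V) (f : {ffun V -> 'I_3}) : bool :=
  [forall v, ((f v == 0 :> nat) ==> [exists u, e v u && (f u == 2 :> nat)])
          && ((0 < f v) ==> [exists u, e v u && (0 < f u)])].

Definition weight (f : {ffun V -> 'I_3}) : nat := \sum_v (f v : nat).

(* Minimum weight of a TRDF (the default 2|V| is only reached when no TRDF
   exists; it is never used for graphs without isolated vertices). *)
Definition gamma_tR (e : rel V) : nat :=
  \big[minn/(2 * #|V|)]_(f | is_TRDF e f) weight f.

Definition tR_bondage_set (e : rel V) (E' : {set {set V}}) : bool :=
  [&& E' \subset edges e, no_isolated (del_edges e E')
    & gamma_tR e < gamma_tR (del_edges e E')].

(* b_tR(G); None encodes infinity. *)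
Definition b_tR (e : rel V) : option nat :=
  if [exists E', tR_bondage_set e E']
  then Some (\big[minn/#|edges e|]_(E' | tR_bondage_set e E') #|E'|)
  else None.

(* Rooted trees: y is a child of x (w.r.t. root r) iff y is adjacent to x
   and x lies on the r--y path, i.e. deleting x separates y from r. *)
Definition child (e : rel V) (r x y : V) : bool :=
  e x y && ~~ connect [rel a b | [&& e a b, a != x & b != x]] r y.

Definition height_one (e : rel V) (r x : V) : bool :=
  [&& x != r, [exists y, child e r x y] & [forall y, child e r x y ==> leaf e y]].

Definition nleaves (e : rel V) (x : V) : nat := #|[set y | e x y && leaf e y]|.

End Graphs.

(* Wounded spider S(k,t): center, t leg ends, t-k subdivision vertices.
   Leg end i (i < t-k) is attached to subdivision vertex i, which is attached
   to the center; leg ends i >= t-k are attached directly to the center. *)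
Definition spider_vert (k t : nat) : finType := ((unit + 'I_t) + 'I_(t - k))%type.

Definition spider_base (k t : nat) (a b : spider_vert k t) : bool :=
  match a, b with
  | inl (inl _), inl (inr i) => t - k <= i
  | inl (inl _), inr _ => true
  | inr j, inl (inr i) => (i : nat) == j
  | _, _ => false
  end.

Definition spider_rel (k t : nat) : rel (spider_vert k t) :=
  [rel a b | spider_base a b || spider_base b a].
Arguments spider_rel : clear implicits.

From mathcomp Require Import all_boot zify.

Set Implicit Arguments. Unset Strict Implicit. Unset Printing Implicit Defensive.

(* All three parts rest on one construction. Let c be a vertex with at least
   two leaf neighbours and a non-leaf neighbour b that supports a leaf w, and
   delete every edge from c to a non-leaf neighbour. In a TRDF g of the
   remaining graph, c and its leaves form a star, which carries weight at
   least 3, and b gets a positive value because of w. Setting c to 2 and its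
   leaves to 0 then gives a strictly lighter TRDF of the original graph, so
   the deleted edges form a bondage set; their number is deg c minus the
   number of leaves at c.
   (1) At c = x only the edge xv is deleted. (2) At c = v this gives the
   bound. (3) At the centre of S(k,t) the t-k edges to the subdivision
   vertices are deleted. Conversely, as long as one centre-subdivision edge
   survives, the TRDF with 2 at the centre and 1 on the subdivided legs, of
   weight 2 + 2(t-k) = gamma_tR(S(k,t)), stays a TRDF, so no smaller set
   works. *)

Section BigMin.
Variables (I : finType) (P : pred I) (d : nat) (F : I -> nat).

Lemma bigmin_le i : P i -> \big[minn/d]_(j | P j) F j <= F i.
Proof.
move=> Pi; rewrite -big_filter.
have : i \in filter P (index_enum I) by rewrite mem_filter Pi mem_index_enum.
elim: (filter _ _) => //= j s IHs; rewrite inE big_cons => /predU1P[->|/IHs].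
  exact: geq_minl.
exact/leq_trans/geq_minr.
Qed.

Lemma leq_bigmin m : m <= d -> (forall i, P i -> m <= F i) ->
  m <= \big[minn/d]_(i | P i) F i.
Proof. by move=> md mF; elim/big_ind: _ => // a b; rewrite leq_min => -> ->. Qed.

End BigMin.

Section Graphs.
Variable V : finType.
Implicit Types (e : rel V) (N : {set V}) (E : {set {set V}}) (f g : {ffun V -> 'I_3}).

Lemma set2_eq_cases (a b c d : V) : [set a; b] = [set c; d] ->
  (a = c /\ b = d) \/ (a = d /\ b = c).
Proof.
move=> E.
have : a \in [set c; d] by rewrite -E set21.
have : b \in [set c; d] by rewrite -E set22.
have : c \in [set a; b] by rewrite E set21.
have : d \in [set a; b] by rewrite E set22.
by move=> /set2P[]? /set2P[]? /set2P[]? /set2P[]?; subst; auto.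
Qed.

Lemma del_edges_subrel e E : subrel (del_edges e E) e.
Proof. by move=> ? ? /andP[]. Qed.

Lemma leaf_adj_eq e u a w : leaf e u -> e u a -> e u w -> w = a.
Proof.
move=> /cards1P[c Nu] ua uw.
have : a \in nbhd e u by rewrite inE.
have : w \in nbhd e u by rewrite inE.
by rewrite Nu !inE => /eqP-> /eqP->.
Qed.

Lemma leaf_of_adj e u a : e u a -> (forall w, e u w -> w = a) -> leaf e u.
Proof.
move=> ua uniq_a; apply/cards1P; exists a; apply/setP => w.
by rewrite !inE; apply/idP/eqP => [/uniq_a|->].
Qed.

Lemma nonleaf_of_adj2 e u a b : e u a -> e u b -> a != b -> ~~ leaf e u.
Proof.
move=> ua ub ab; rewrite /leaf /deg neq_ltn orbC; apply/orP; left.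
by apply/card_gt1P; exists a, b; rewrite !inE ua ub.
Qed.

Lemma nonleaf_adj_neq e u a : e u a -> ~~ leaf e u -> exists2 w, e u w & w != a.
Proof.
move=> ua; rewrite /leaf /deg neq_ltn ltnS leqn0 cards_eq0.
have -> : (nbhd e u == set0) = false by apply/negbTE/set0Pn; exists a; rewrite inE.
case/card_gt1P => w1 [w2 []]; rewrite !inE => uw1 uw2 w12.
by case: (eqVneq w1 a) => [w1a|]; [exists w2; rewrite // -w1a eq_sym | exists w1].
Qed.

Lemma TRDF_zero_adj e g u : is_TRDF e g -> g u = 0 :> nat ->
  exists w, e u w /\ g w = 2 :> nat.
Proof.
move=> /forallP/(_ u)/andP[H _] /eqP/(implyP H)/existsP[w /andP[uw /eqP gw]].
by exists w.
Qed.

Lemma TRDF_pos_adj e g u : is_TRDF e g -> 0 < g u -> exists w, e u w /\ 0 < g w.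
Proof.
move=> /forallP/(_ u)/andP[_ H] /(implyP H)/existsP[w /andP[uw gw]].
by exists w.
Qed.

Lemma TRDF_pendant_pos e g u a : is_TRDF e g -> (forall w, e u w -> w = a) ->
  0 < g a.
Proof.
move=> Hg pend.
by case: (posnP (g u)) => [/(TRDF_zero_adj Hg)|/(TRDF_pos_adj Hg)] [w [/pend-> ->]].
Qed.

Lemma TRDF_pendant_sum e g u a : is_TRDF e g -> (forall w, e u w -> w = a) ->
  2 <= g a + g u.
Proof.
move=> Hg pend; case: (posnP (g u)) => [gu0|gu_pos].
  by have [w [/pend-> ->]] := TRDF_zero_adj Hg gu0.
have [w [/pend-> gw]] := TRDF_pos_adj Hg gu_pos; exact: (leq_add gw gu_pos).
Qed.

Lemma TRDF_star_ge3 e g a (A : {set V}) u1 u2 :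
  is_TRDF e g -> u1 \in A -> u2 \in A -> u1 != u2 ->
  (forall u, u \in A -> forall w, e u w -> w = a) ->
  (forall w, e a w -> w \in A) ->
  3 <= g a + \sum_(u in A) g u.
Proof.
move=> Hg A1 A2 u12 pend adjA.
have le_sum u : u \in A -> g u <= \sum_(u in A) g u.
  by move=> uA; rewrite (bigD1 u) //= leq_addr.
have sum12 : g u1 + g u2 <= \sum_(u in A) g u.
  by rewrite (bigD1 u1) //= (bigD1 u2) /= ?A2 1?eq_sym // addnA leq_addr.
have := TRDF_pendant_sum Hg (pend _ A1); have := TRDF_pendant_sum Hg (pend _ A2).
case: (ltnP (g a) 2) => [|ga2]; first lia.
have [w [aw gw]] := TRDF_pos_adj Hg (ltnW ga2).
have := le_sum w (adjA w aw); lia.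
Qed.

Definition leaf_nbhd e c : {set V} := [set u | e c u && leaf e u].
Definition nonleaf_nbhd e c : {set V} := [set u | e c u && ~~ leaf e u].

Lemma deg_leaf_nonleaf e c : deg e c = nleaves e c + #|nonleaf_nbhd e c|.
Proof.
rewrite /deg -(cardsID [set u | leaf e u]) /nleaves.
by congr (_ + _); apply: eq_card => u; rewrite !inE // andbC.
Qed.

Lemma weight_le_card f : weight f <= 2 * #|V|.
Proof.
rewrite mulnC -sum_nat_const; apply: leq_sum => u _.
by rewrite -ltnS ltn_ord.
Qed.

Lemma gamma_tR_le e f : is_TRDF e f -> gamma_tR e <= weight f.
Proof. exact: bigmin_le. Qed.

Lemma gamma_tR_ge e f0 m : is_TRDF e f0 ->
  (forall f, is_TRDF e f -> m <= weight f) -> m <= gamma_tR e.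
Proof.
move=> Hf0 lb; apply: leq_bigmin (lb).
exact: leq_trans (lb _ Hf0) (weight_le_card f0).
Qed.

Lemma ones_TRDF e : no_isolated e -> is_TRDF e [ffun=> inord 1].
Proof.
move=> /forallP noiso; apply/forallP => u; rewrite !ffunE inordK //=.
have [w uw] := existsP (noiso u).
by apply/existsP; exists w; rewrite uw ffunE inordK.
Qed.

Lemma gamma_tR_min e : no_isolated e ->
  exists2 g, is_TRDF e g & gamma_tR e = weight g.
Proof.
move=> /ones_TRDF H1; case: (arg_minnP (@weight V) H1) => g Hg gmin.
exists g => //; apply/eqP; rewrite eqn_leq gamma_tR_le //.
exact: gamma_tR_ge Hg gmin.
Qed.

Lemma tR_bondage_set_neq0 e E : tR_bondage_set e E -> E != set0.
Proof.
case/and3P=> _ _; apply: contraTneq => ->.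
suff -> : gamma_tR (del_edges e set0) = gamma_tR e by rewrite ltnn.
apply: eq_bigl => f; apply: eq_forallb => v.
by congr (_ && _); congr (_ ==> _); apply: eq_existsb => u;
  rewrite /del_edges /= in_set0 andbT.
Qed.

Lemma b_tR_le e E : tR_bondage_set e E -> exists2 b, b_tR e = Some b & b <= #|E|.
Proof.
move=> BE; rewrite /b_tR (introT existsP (ex_intro _ E BE)).
by exists (\big[minn/#|edges e|]_(E' | tR_bondage_set e E') #|E'|);
  last exact: bigmin_le.
Qed.

Lemma b_tR_eq e E : tR_bondage_set e E ->
  (forall E', tR_bondage_set e E' -> #|E| <= #|E'|) -> b_tR e = Some #|E|.
Proof.
move=> BE Emin; rewrite /b_tR (introT existsP (ex_intro _ E BE)); congr Some.
apply/eqP; rewrite eqn_leq bigmin_le //=; apply: leq_bigmin Emin.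
by apply: subset_leq_card; case/and3P: BE.
Qed.

Definition concentrate e a g : {ffun V -> 'I_3} :=
  [ffun u => if u == a then inord 2 else if u \in leaf_nbhd e a then ord0 else g u].

Lemma weight_concentrate e a g : irreflexive e ->
  weight (concentrate e a g) + (g a + \sum_(u in leaf_nbhd e a) g u) = 2 + weight g.
Proof.
move=> irr; have aL : a \notin leaf_nbhd e a by rewrite inE irr.
have split h : weight h = h a + \sum_(u in leaf_nbhd e a) h u
                          + \sum_(u | (u != a) && (u \notin leaf_nbhd e a)) h u.
  rewrite /weight (bigD1 a) //= (bigID [in leaf_nbhd e a]) /= addnA.
  by congr (_ + _ + _); apply: eq_bigl => u; case: eqP => // ->; rewrite (negbTE aL).
rewrite !split ffunE eqxx inordK // big1 => [|u uL]; last first.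
  by rewrite ffunE uL; case: eqP => // ua; move: uL; rewrite ua (negbTE aL).
rewrite [X in 2 + 0 + X](eq_bigr (fun u => g u : nat)) /=; first lia.
by move=> u /andP[ua uL]; rewrite ffunE (negbTE ua) (negbTE uL).
Qed.

Lemma concentrate_TRDF e e' a b g : simple_graph e -> subrel e' e ->
  is_TRDF e' g -> e a b -> ~~ leaf e b -> 0 < g b -> is_TRDF e (concentrate e a g).
Proof.
move=> [sym irr] sub Hg ab nlb gb; set f := concentrate e a g.
have fa : f a = 2 :> nat by rewrite ffunE eqxx inordK.
have fE u : u != a -> u \notin leaf_nbhd e a -> f u = g u.
  by move=> ua uL; rewrite ffunE (negbTE ua) (negbTE uL).
apply/forallP => v; case: (eqVneq v a) => [->|va].
  rewrite fa /=; apply/existsP; exists b; rewrite ab fE //.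
    by apply: contraTneq ab => ->; rewrite irr.
  by rewrite inE negb_and nlb orbT.
case: (boolP (v \in leaf_nbhd e a)) => [vL|vL].
  have fv : f v = 0 :> nat by rewrite ffunE (negbTE va) vL.
  rewrite fv /= andbT; apply/existsP; exists a; rewrite fa andbT.
  by move: vL; rewrite inE sym => /andP[].
(* v != a is adjacent to no leaf at a *)
have f_adj w : e' v w -> f w = g w \/ f w = 2 :> nat.
  move=> /sub vw; case: (eqVneq w a) => [->|wa]; first by right.
  case: (boolP (w \in leaf_nbhd e a)) => [|wL]; last by left; rewrite fE.
  rewrite inE sym => /andP[w_a lw]; rewrite sym in vw.
  by move: va; rewrite (leaf_adj_eq lw w_a vw) eqxx.
have lift (Q : pred nat) : Q 2 ->
    [exists w, e' v w && Q (g w)] -> [exists w, e v w && Q (f w)].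
  move=> Q2 /existsP[w /andP[vw Qw]]; apply/existsP; exists w.
  by rewrite (sub _ _ vw); case: (f_adj w vw) => ->.
have /forallP/(_ v)/andP[H0 Hpos] := Hg.
rewrite fE //; apply/andP; split; apply/implyP.
  by move=> /(implyP H0); apply: (lift (fun n => n == 2)).
by move=> /(implyP Hpos); apply: (lift (fun n => 0 < n)).
Qed.

Definition star_edges (c : V) N : {set {set V}} := [set [set c; z] | z in N].

Lemma mem_star_edges c N u z : [set u; z] \in star_edges c N ->
  (u = c /\ z \in N) \/ (z = c /\ u \in N).
Proof. by case/imsetP=> y yN /set2_eq_cases[[-> ->]|[-> ->]]; [left|right]. Qed.

Lemma card_star_edges c N : c \notin N -> #|star_edges c N| = #|N|.
Proof.
move=> cN; apply: card_in_imset => z1 z2 _ z2N /set2_eq_cases[[_ ->]|[cz2 _]] //.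
by move: cN; rewrite cz2 z2N.
Qed.

Definition cut_edges e c := star_edges c (nonleaf_nbhd e c).

Lemma card_cut_edges e c : irreflexive e -> #|cut_edges e c| = #|nonleaf_nbhd e c|.
Proof. by move=> irr; rewrite card_star_edges // inE irr. Qed.

Lemma cut_edges_no_isolated e c u0 : simple_graph e -> no_isolated e ->
  u0 \in leaf_nbhd e c -> no_isolated (del_edges e (cut_edges e c)).
Proof.
move=> [sym irr] /forallP noiso; rewrite inE => /andP[cu0 lu0].
apply/forallP => u; apply/existsP; rewrite /del_edges.
case: (eqVneq u c) => [->|uc].
  exists u0; rewrite /= cu0; apply/negP => /mem_star_edges[[_]|[u0c _]].
    by rewrite inE lu0 andbF.
  by move: cu0; rewrite u0c irr.
case: (boolP (u \in nonleaf_nbhd e c)) => [|uN].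
  rewrite inE sym => /andP[uc' /(nonleaf_adj_neq uc')][w uw wc].
  exists w; rewrite /= uw; apply/negP => /mem_star_edges[[uc'' _]|[wc' _]].
    by rewrite uc'' eqxx in uc.
  by rewrite wc' eqxx in wc.
have [w uw] := existsP (noiso u).
exists w; rewrite /= uw; apply/negP => /mem_star_edges[[uc'' _]|[_ uN']].
  by rewrite uc'' eqxx in uc.
by rewrite uN' in uN.
Qed.

Lemma cut_edges_gamma_lt e c b w u1 u2 : simple_graph e ->
  no_isolated (del_edges e (cut_edges e c)) ->
  u1 \in leaf_nbhd e c -> u2 \in leaf_nbhd e c -> u1 != u2 ->
  e c b -> ~~ leaf e b -> e b w -> leaf e w ->
  gamma_tR e < gamma_tR (del_edges e (cut_edges e c)).
Proof.
move=> [sym irr] noiso u1L u2L u12 cb nlb bw lw.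
set e' := del_edges e _; have sub : subrel e' e := @del_edges_subrel e _.
have [g Hg ->] := gamma_tR_min noiso.
have gb : 0 < g b.
  by apply: (TRDF_pendant_pos Hg) => z /sub; apply: leaf_adj_eq lw _; rewrite sym.
have pend u : u \in leaf_nbhd e c -> forall z, e' u z -> z = c.
  rewrite inE => /andP[cu lu] z /sub; apply: leaf_adj_eq lu _; by rewrite sym.
have adjL z : e' c z -> z \in leaf_nbhd e c.
  move=> /andP[cz nz]; rewrite inE cz /=; apply: contraNT nz => nlz.
  by apply/imsetP; exists z; rewrite // inE cz nlz.
have H3 := TRDF_star_ge3 Hg u1L u2L u12 pend adjL.
have Hf := concentrate_TRDF (conj sym irr) sub Hg cb nlb gb.
apply: leq_ltn_trans (gamma_tR_le Hf) _.
have := weight_concentrate c g irr; lia.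
Qed.

Lemma cut_edges_bondage e c b w u1 u2 : simple_graph e -> no_isolated e ->
  u1 \in leaf_nbhd e c -> u2 \in leaf_nbhd e c -> u1 != u2 ->
  e c b -> ~~ leaf e b -> e b w -> leaf e w ->
  tR_bondage_set e (cut_edges e c).
Proof.
move=> sg noiso u1L u2L u12 cb nlb bw lw.
have noiso' := cut_edges_no_isolated sg noiso u1L.
apply/and3P; split => //; last exact: cut_edges_gamma_lt noiso' u1L u2L u12 cb nlb bw lw.
apply/subsetP => s /imsetP[z]; rewrite inE => /andP[cz _] ->.
by rewrite inE; apply/existsP; exists c; apply/existsP; exists z; rewrite cz eqxx.
Qed.

End Graphs.

Section Trees.
Variable V : finType.
Implicit Types (e : rel V).

Lemma notin_path (E : rel V) x z p : (forall a b, E a b -> b != x) ->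
  path E z p -> x \notin p.
Proof.
move=> Ex; elim: p z => //= a p IHp z /andP[za pa].
by rewrite inE negb_or eq_sym (Ex _ _ za) (IHp _ pa).
Qed.

(* A path from v to y avoiding x would close the cycle x v ... y x. *)
Lemma tree_other_neighbor_child e r x v y : is_tree e -> e x v ->
  ~~ child e r x v -> e x y -> y != v -> child e r x y.
Proof.
move=> [[sym irr] _ acyc] xv; rewrite /child xv /= negbK => Crv xy yv.
rewrite xy /=; apply/negP => Cry.
set E := [rel a b | [&& e a b, a != x & b != x]] in Crv Cry.
have symE : symmetric E.
  by move=> a b /=; rewrite sym; case: (a != x); rewrite ?andbF ?andbT.
have /connectP[p pE yp] : connect E v y.
  by apply: connect_trans _ Cry; rewrite (sym_connect_sym symE).
case: (shortenP pE) yp => q qE uq _ yq.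
have xq : x \notin q by apply: notin_path qE => a b /and3P[].
have vx : v != x by apply: contraTneq xv => ->; rewrite irr.
have U : uniq (x :: v :: q) by rewrite cons_uniq uq andbT inE negb_or eq_sym vx xq.
have S : 3 <= size (x :: v :: q).
  by case: q {qE uq xq U} yq => [/= yv'|]; rewrite // -yv' eqxx in yv.
case/negP: (acyc _ U S); rewrite /cycle /= xv rcons_path -yq sym xy andbT.
by apply: sub_path qE => a b /and3P[].
Qed.

Lemma tree_no_isolated e x v : is_tree e -> e x v -> no_isolated e.
Proof.
move=> [[_ irr] conn _] xv; apply/forallP => u; apply/existsP.
have [z uz] : exists z, z != u.
  case: (eqVneq x u) => [xu|]; last by exists x.
  by exists v; apply: contraTneq xv => ->; rewrite xu irr.
case/connectP: (conn u z) => [[|w p]] /=; first by move=> _ zu; rewrite zu eqxx in uz.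
by case/andP=> uw _ _; exists w.
Qed.

Lemma height_one_nonleaf_nbhd e r x v : is_tree e -> height_one e r x ->
  e x v -> ~~ child e r x v -> ~~ leaf e v -> nonleaf_nbhd e x = [set v].
Proof.
move=> T /and3P[_ _ /forallP leaf_child] xv nxv nlv; apply/setP => z.
rewrite !inE; case: (eqVneq z v) => [->|zv]; first by rewrite xv nlv.
apply/negbTE; rewrite negb_and negbK -implybE.
apply/implyP => xz.
exact: implyP (leaf_child z) (tree_other_neighbor_child T xv nxv xz zv).
Qed.

Lemma height_one_b_tR_eq1 e r x v : is_tree e -> height_one e r x ->
  e x v -> ~~ child e r x v -> 1 <= nleaves e v -> 2 <= nleaves e x ->
  b_tR e = Some 1.
Proof.
move=> T hx xv nxv; have [[sym irr] _ _] := T.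
have vx : e v x by rewrite sym.
move=> /card_gt0P[w]; rewrite inE => /andP[vw lw].
move=> /card_gt1P[u1 [u2 [u1L u2L u12]]].
have nlx : ~~ leaf e x.
  move: u1L u2L; rewrite !inE => /andP[xu1 _] /andP[xu2 _].
  exact: nonleaf_of_adj2 xu1 xu2 u12.
have nlv : ~~ leaf e v.
  by apply: nonleaf_of_adj2 vw vx _; apply: contraNneq nlx => <-.
have B := cut_edges_bondage (conj sym irr) (tree_no_isolated T xv)
  u1L u2L u12 xv nlv vw lw.
have card1 : #|cut_edges e x| = 1.
  by rewrite card_cut_edges // (height_one_nonleaf_nbhd T hx xv nxv nlv) cards1.
rewrite -card1; apply: b_tR_eq B _ => E BE.
by rewrite card1 card_gt0 (tR_bondage_set_neq0 BE).
Qed.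

Lemma height_one_b_tR_le e r x v : is_tree e -> height_one e r x ->
  e x v -> ~~ child e r x v -> 2 <= nleaves e v ->
  exists2 b, b_tR e = Some b & b <= deg e v - nleaves e v.
Proof.
move=> T /and3P[_ /existsP[y cy] /forallP leaf_child] xv nxv.
have [[sym irr] _ _] := T; have vx : e v x by rewrite sym.
have ly : leaf e y := implyP (leaf_child y) cy.
have xy : e x y by case/andP: cy.
have nlx : ~~ leaf e x by apply: nonleaf_of_adj2 xy xv _; apply: contraNneq nxv => <-.
move=> /card_gt1P[u1 [u2 [u1L u2L u12]]].
have [b Hb Hle] := b_tR_le
  (cut_edges_bondage (conj sym irr) (tree_no_isolated T xv) u1L u2L u12 vx nlx xy ly).
by exists b; rewrite // deg_leaf_nonleaf addKn -card_cut_edges.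
Qed.

End Trees.

Section Spider.
Variables k t : nat.
Hypothesis k_range : 2 <= k <= t.-1.

Local Arguments spider_rel k t /.
Local Notation V := (spider_vert k t).
Local Notation e := (spider_rel k t).
Local Notation sp_center := (inl (inl tt) : V).
Local Notation sp_end i := (inl (inr i) : V).
Local Notation sp_mid j := (inr j : V).
Local Notation sp_foot j := (sp_end (widen_ord (leq_subr k t) j)).

Let first_end_lt : t - k < t. Proof. lia. Qed.
Let last_end_lt : t.-1 < t. Proof. lia. Qed.
Let first_end : 'I_t := Ordinal first_end_lt.
Let last_end : 'I_t := Ordinal last_end_lt.
Let last_end_ge : t - k <= last_end. Proof. rewrite /last_end /=; lia. Qed.
Let first_mid_lt : 0 < t - k. Proof. lia. Qed.
Let first_mid : 'I_(t - k) := Ordinal first_mid_lt.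

Lemma spider_simple : simple_graph e.
Proof. by split=> [a b|[[[]|i]|j]]; first exact: orbC. Qed.

Lemma sp_end_adj (i : 'I_t) : t - k <= i -> forall w, e (sp_end i) w -> w = sp_center.
Proof.
move=> ki; case=> [[[]|i']|j] //=; rewrite ?orbF //=.
by move=> /eqP ij; move: ki; rewrite ij leqNgt ltn_ord.
Qed.

Lemma sp_foot_adj (j : 'I_(t - k)) w : e (sp_foot j) w -> w = sp_mid j.
Proof.
case: w => [[[]|i']|j'] //=; rewrite ?orbF //=; first by rewrite leqNgt ltn_ord.
by move=> /eqP jj'; congr inr; apply: val_inj.
Qed.

Lemma sp_center_adj w : e sp_center w ->
  (exists2 i : 'I_t, t - k <= i & w = sp_end i) \/ (exists j, w = sp_mid j).
Proof.
case: w => [[[]|i]|j] //= H; [left; exists i | right; exists j] => //.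
by move: H; rewrite orbF.
Qed.

Lemma leaf_sp_end (i : 'I_t) : t - k <= i -> leaf e (sp_end i).
Proof.
by move=> ki; apply: (leaf_of_adj (a := sp_center)); [rewrite /= ki | exact: sp_end_adj ki].
Qed.

Lemma leaf_sp_foot (j : 'I_(t - k)) : leaf e (sp_foot j).
Proof. by apply: (leaf_of_adj (a := sp_mid j)); [rewrite /= eqxx|exact: sp_foot_adj]. Qed.

Lemma nonleaf_sp_mid (j : 'I_(t - k)) : ~~ leaf e (sp_mid j).
Proof. by apply: (nonleaf_of_adj2 (a := sp_center) (b := sp_foot j)); rewrite /= ?eqxx. Qed.

Lemma spider_no_isolated : no_isolated e.
Proof.
apply/forallP => -[[[]|i]|j]; apply/existsP.
- by exists (sp_mid first_mid).
- case: (ltnP i (t - k)) => ki; first by exists (sp_mid (Ordinal ki)); rewrite /= eqxx.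
  by exists sp_center; rewrite /= ki.
- by exists sp_center.
Qed.

Lemma nonleaf_nbhd_sp_center :
  nonleaf_nbhd e sp_center = [set sp_mid j | j : 'I_(t - k)].
Proof.
apply/setP => z; rewrite inE; apply/andP/imsetP => [[cz nlz]|[j _ ->]].
  case: (sp_center_adj cz) => [[i ki zi]|[j ->]]; last by exists j.
  by rewrite zi leaf_sp_end in nlz.
by split; [|exact: nonleaf_sp_mid].
Qed.

Lemma card_cut_edges_spider : #|cut_edges e sp_center| = t - k.
Proof.
rewrite card_cut_edges; last by case: spider_simple.
by rewrite nonleaf_nbhd_sp_center card_imset ?card_ord //; move=> ? ? [].
Qed.

Lemma weight_spider (g : {ffun V -> 'I_3}) :
  weight g = g sp_center + \sum_(i < t) g (sp_end i) + \sum_(j < t - k) g (sp_mid j).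
Proof. by rewrite /weight big_sumType /= big_sumType /= (big_pred1 tt). Qed.

Lemma sum_sp_ends (g : {ffun V -> 'I_3}) :
  \sum_(i < t) g (sp_end i) =
  \sum_(j < t - k) g (sp_foot j) + \sum_(i < t | t - k <= i) g (sp_end i).
Proof.
rewrite (bigID (fun i : 'I_t => i < t - k)) /= (big_ord_narrow (leq_subr k t)).
by congr (_ + _); apply: eq_bigl => i; rewrite -leqNgt.
Qed.

Lemma spider_weight_ge (g : {ffun V -> 'I_3}) :
  is_TRDF e g -> 2 + 2 * (t - k) <= weight g.
Proof.
move=> Hg.
have legs : \sum_(j < t - k) 2 <= \sum_(j < t - k) (g (sp_foot j) + g (sp_mid j)).
  by apply: leq_sum => j _; rewrite addnC; apply: TRDF_pendant_sum Hg (@sp_foot_adj j).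
have last_le : g (sp_end last_end) <= \sum_(i < t | t - k <= i) g (sp_end i).
  by rewrite (bigD1 last_end) //= leq_addr.
have hub : 2 <= g sp_center + \sum_(i < t | t - k <= i) g (sp_end i).
  apply: leq_trans (TRDF_pendant_sum Hg (sp_end_adj last_end_ge)) _.
  by rewrite leq_add2l.
rewrite sum_nat_const card_ord big_split /= mulnC in legs.
by rewrite weight_spider sum_sp_ends addnCA addnAC addnC leq_add.
Qed.

Definition spider_trdf : {ffun V -> 'I_3} := [ffun u : V =>
  match u with
  | inl (inl _) => inord 2
  | inl (inr i) => if i < t - k then inord 1 else ord0
  | inr _ => inord 1
  end].

Lemma weight_spider_trdf : weight spider_trdf = 2 + 2 * (t - k).
Proof.
have ones (I : finType) (F : I -> V) : (forall i, spider_trdf (F i) = 1 :> nat) ->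
    \sum_(i : I) spider_trdf (F i) = #|I|.
  by move=> F1; rewrite (eq_bigr (fun=> 1)) ?sum1_card.
rewrite weight_spider sum_sp_ends ffunE inordK //.
rewrite [\sum_(i < t | _) _]big1 => [|i ki]; last by rewrite ffunE ltnNge ki.
rewrite !ones ?card_ord => [|j|j]; rewrite ?ffunE /= ?ltn_ord ?inordK //; lia.
Qed.

Lemma spider_trdf_zero u : spider_trdf u = 0 :> nat -> forall w, e u w -> w = sp_center.
Proof.
case: u => [[[]|i]|j]; rewrite ffunE ?inordK //.
by case: ltnP => [|ki _]; [rewrite inordK | exact: sp_end_adj].
Qed.

(* By spider_trdf_zero, only the centre can have a neighbour of value 0. *)
Lemma spider_trdf_TRDF (e' : rel V) j0 : subrel e' e -> no_isolated e' ->
  e' sp_center (sp_mid j0) -> is_TRDF e' spider_trdf.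
Proof.
move=> sub /forallP noiso cj0; apply/forallP => u.
have [w uw] := existsP (noiso u).
case: (posnP (spider_trdf u)) => [u0|upos] /=.
  rewrite andbT; apply/existsP; exists w.
  by rewrite uw (spider_trdf_zero u0 (sub _ _ uw)) ffunE inordK.
apply/existsP.
case: (eqVneq u sp_center) => [->|uc].
  by exists (sp_mid j0); rewrite cj0 ffunE inordK.
exists w; rewrite uw lt0n; apply: contra uc => /eqP w0; apply/eqP.
by apply: (spider_trdf_zero w0); case: spider_simple => sym _; rewrite sym; apply: sub.
Qed.

Lemma spider_gamma_ge : 2 + 2 * (t - k) <= gamma_tR e.
Proof.
apply: gamma_tR_ge spider_weight_ge.
exact: (@spider_trdf_TRDF e first_mid) spider_no_isolated _.
Qed.

Lemma spider_bondage_card E : tR_bondage_set e E -> t - k <= #|E|.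
Proof.
case/and3P=> _ noisoE gamma_lt.
case: (boolP (cut_edges e sp_center \subset E)) => [/subset_leq_card|].
  by rewrite card_cut_edges_spider.
case/subsetPn=> s /imsetP[z]; rewrite nonleaf_nbhd_sp_center => /imsetP[j _ ->] -> cjE.
have cj : del_edges e E sp_center (sp_mid j) by rewrite /del_edges /= cjE.
have := gamma_tR_le (spider_trdf_TRDF (@del_edges_subrel _ e E) noisoE cj).
have := spider_gamma_ge; rewrite weight_spider_trdf; lia.
Qed.

Lemma b_tR_spider : b_tR e = Some (t - k).
Proof.
have first_leaf : sp_end first_end \in leaf_nbhd e sp_center.
  by rewrite inE /= leqnn leaf_sp_end.
have last_leaf : sp_end last_end \in leaf_nbhd e sp_center.
  by rewrite inE /= last_end_ge leaf_sp_end.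
have first_last : sp_end first_end != sp_end last_end.
  by apply/eqP => -[]; lia.
have center_mid : e sp_center (sp_mid first_mid) by [].
have mid_foot : e (sp_mid first_mid) (sp_foot first_mid) by [].
have B := cut_edges_bondage spider_simple spider_no_isolated first_leaf last_leaf
  first_last center_mid (nonleaf_sp_mid first_mid) mid_foot (leaf_sp_foot first_mid).
rewrite -card_cut_edges_spider; apply: b_tR_eq B _ => E BE.
by rewrite card_cut_edges_spider spider_bondage_card.
Qed.

End Spider.

Theorem mainTheorem10 :
  (forall (V : finType) (e : rel V) (r x v : V),
     is_tree e -> height_one e r x -> e x v -> ~~ child e r x v ->
     1 <= nleaves e v -> 2 <= nleaves e x -> b_tR e = Some 1)
  /\
  (forall (V : finType) (e : rel V) (r x v : V),
     is_tree e -> height_one e r x -> e x v -> ~~ child e r x v ->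
     2 <= nleaves e v -> nleaves e x = 1 ->
     exists b, b_tR e = Some b /\ b <= deg e v - nleaves e v)
  /\
  (forall k t : nat, 3 <= t -> 2 <= k <= t.-1 ->
     b_tR (spider_rel k t) = Some (t - k)).
Proof.
split; first exact: height_one_b_tR_eq1.
split.
  move=> V e r x v T hx xv nxv lv _.
  by have [b] := height_one_b_tR_le T hx xv nxv lv; exists b.
by move=> k t _; apply: b_tR_spider.
Qed.
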